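(* Let $P\subset\mathbb{R}^n$ be a smooth $n$-dimensional lattice polytope with codegree $c$ and nef value $\tau$. Then $\tau\in\mathbb{Q}_{>0}$ and $\tau>c-1$.
   Context: Write $P=\bigcap_{i=1}^r\{x:\langle\rho_i,x\rangle\ge -a_i\}$ with primitive inner facet normals $\rho_i$ and $a_i\in\mathbb{Z}$; $P$ is smooth if each vertex lies on exactly $n$ facet hyperplanes whose normals form a basis of $\mathbb{Z}^n$. $P^{(s)}=\bigcap_i\{\langle\rho_i,x\rangle\ge -a_i+s\}$. For a vertex $m$ with $\{m\}=\bigcap_{i=1}^n\{\langle\rho_i,x\rangle=-a_i\}$, $m(s)$ is defined by $\{m(s)\}=\bigcap_{i=1}^n\{\langle\rho_i,x\rangle=-a_i+s\}$; $P$ is $s$-spanned if $m(s)\in P^{(s)}$ for all vertices $m$. Codegree: $c=\operatorname{codeg}(P)=\min\{k\in\mathbb{N}:(kP)^{(1)}\cap\mathbb{Z}^n\ne\emptyset\}$. Nef value: $\tau=\tau(P)=\inf\{a/b: a,b\in\mathbb{Z}_{>0},\ aP\text{ is }b\text{-spanned}\}$. *)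

From HB Require Import structures.
From mathcomp Require Import all_boot all_order all_algebra.
From mathcomp Require Import all_classical all_reals.
Set Implicit Arguments. Unset Strict Implicit. Unset Printing Implicit Defensive.
Import Order.TTheory GRing.Theory Num.Theory.
Local Open Scope classical_set_scope.
Local Open Scope ring_scope.

Section PolytopeDefs.
Variables (R : realType) (n r : nat).

Definition pairing (rho : 'rV[int]_n) (x : 'rV[R]_n) : R :=
  \sum_(j < n) (rho 0 j)%:~R * x 0 j.

Definition poly (rho : 'I_r -> 'rV[int]_n) (a : 'I_r -> int) : set 'rV[R]_n :=
  [set x | forall i, - (a i)%:~R <= pairing (rho i) x].

Definition shiftP (rho : 'I_r -> 'rV[int]_n) (a : 'I_r -> int) (s : int) :=
  poly rho (fun i => a i - s).

Definition dil (a : 'I_r -> int) (k : int) : 'I_r -> int := fun i => k * a i.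

Definition lattice_point (x : 'rV[R]_n) : Prop :=
  exists z : 'rV[int]_n, x = map_mx (fun t : int => t%:~R) z.

Definition primitive (v : 'rV[int]_n) : Prop :=
  forall (k : int) (w : 'rV[int]_n), v = k *: w -> `|k| = 1.

Definition affdim_ge (S : set 'rV[R]_n) (d : nat) : Prop :=
  exists p : 'I_d.+1 -> 'rV[R]_n, (forall k, S (p k)) /\
    \rank (\matrix_(k < d) (p (lift ord0 k) - p ord0)) = d.

Definition affdim (S : set 'rV[R]_n) (d : nat) : Prop :=
  affdim_ge S d /\ ~ affdim_ge S d.+1.

Definition bounded (S : set 'rV[R]_n) : Prop :=
  exists M : R, forall x, S x -> forall j, `|x 0 j| <= M.

Definition is_vertex (S : set 'rV[R]_n) (m : 'rV[R]_n) : Prop :=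
  S m /\ forall x y (t : R), S x -> S y -> 0 < t -> t < 1 ->
    m = t *: x + (1 - t) *: y -> x = y.

Definition face_of (rho : 'I_r -> 'rV[int]_n) (a : 'I_r -> int) (i : 'I_r) :
  set 'rV[R]_n :=
  [set x | poly rho a x /\ pairing (rho i) x = - (a i)%:~R].

Definition lattice_polytope_facets (rho : 'I_r -> 'rV[int]_n) (a : 'I_r -> int)
  : Prop :=
  bounded (poly rho a) /\
  affdim_ge (poly rho a) n /\
  (forall m, is_vertex (poly rho a) m -> lattice_point m) /\
  injective rho /\
  (forall i, primitive (rho i)) /\
  (forall i, affdim (face_of rho a i) n.-1).

Definition Zbasis (f : 'I_n -> 'rV[int]_n) : Prop :=
  (forall v : 'rV[int]_n, exists c : 'I_n -> int, v = \sum_(k < n) c k *: f k) /\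
  (forall c : 'I_n -> int, \sum_(k < n) c k *: f k = 0 -> forall k, c k = 0).

Definition smooth (rho : 'I_r -> 'rV[int]_n) (a : 'I_r -> int) : Prop :=
  forall m, is_vertex (poly rho a) m ->
    exists e : 'I_n -> 'I_r, [/\ injective e,
      (forall i, pairing (rho i) m = - (a i)%:~R <-> exists k, e k = i) &
      Zbasis (fun k => rho (e k))].

(* s-spanned: for each vertex m, the point m(s) (the intersection of the
   shifted hyperplanes of the facets through m) lies in P^{(s)} *)
Definition spanned (rho : 'I_r -> 'rV[int]_n) (a : 'I_r -> int) (s : int) : Prop :=
  forall m, is_vertex (poly rho a) m ->
    forall x : 'rV[R]_n,
      (forall i, pairing (rho i) m = - (a i)%:~R ->
                 pairing (rho i) x = - (a i)%:~R + s%:~R) ->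
      shiftP rho a s x.

Definition is_codegree (rho : 'I_r -> 'rV[int]_n) (a : 'I_r -> int) (c : nat) : Prop :=
  (exists x, lattice_point x /\ shiftP rho (dil a c%:Z) 1 x) /\
  (forall k : nat, (k < c)%N ->
     ~ exists x, lattice_point x /\ shiftP rho (dil a k%:Z) 1 x).

Definition nef_value (rho : 'I_r -> 'rV[int]_n) (a : 'I_r -> int) : R :=
  inf [set t : R | exists p q : nat, [/\ (0 < p)%N, (0 < q)%N,
        t = p%:R / q%:R & spanned rho (dil a p%:Z) q%:Z]].

End PolytopeDefs.

(* At a vertex m the facet normals form a Z-basis, so there is a unique, integral
   v_m with <rho_i, v_m> = 1 on the facets through m, and m(s) = m + s v_m.
   Hence pP is q-spanned iff q (1 - <rho_i, v_m>) <= p (<rho_i, m> + a_i) for all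
   vertices m and facets i, i.e. tau is the largest of finitely many quotients of
   integers (1 - <rho_i, v_m>) / (<rho_i, m> + a_i).  It is positive, since
   otherwise v_m would be a recession direction of the bounded P.  If tau <= c - 1
   with c >= 2, then (c-1)P is 1-spanned and (c-1)m + v_m is a lattice point of
   ((c-1)P)^(1), contradicting the minimality of c. *)

From Pilot Require Import Defs.
From HB Require Import structures.
From mathcomp Require Import all_boot all_order all_algebra.
From mathcomp Require Import all_classical all_reals.
From mathcomp Require Import lra.
Set Implicit Arguments. Unset Strict Implicit. Unset Printing Implicit Defensive.
Import Order.TTheory GRing.Theory Num.Theory.
Local Open Scope ring_scope.

Local Notation polyhedron := Pilot.Defs.poly.
Local Notation intmx := (map_mx (fun t : int => t%:~R)).

Section Pairing.
Variables (R : realType) (n : nat).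
Implicit Types (u : 'rV[int]_n) (x y : 'rV[R]_n).

Lemma pairingD u x y : pairing u (x + y) = pairing u x + pairing u y.
Proof. by rewrite /pairing -big_split; apply: eq_bigr => j _; rewrite mxE mulrDr. Qed.

Lemma pairingZ u (k : R) x : pairing u (k *: x) = k * pairing u x.
Proof. by rewrite /pairing mulr_sumr; apply: eq_bigr => j _; rewrite mxE mulrCA. Qed.

Lemma pairingB u x y : pairing u (x - y) = pairing u x - pairing u y.
Proof. by rewrite pairingD -scaleN1r pairingZ mulN1r. Qed.

Lemma pairing0 u : pairing u (0 : 'rV[R]_n) = 0.
Proof. by rewrite -(scale0r 0) pairingZ mul0r. Qed.

Lemma pairing_sum (m : nat) (c : 'I_m -> int) (f : 'I_m -> 'rV[int]_n) x :
  pairing (\sum_(k < m) c k *: f k) x = \sum_(k < m) (c k)%:~R * pairing (f k) x.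
Proof.
rewrite /pairing.
under eq_bigr => j _ do rewrite summxE rmorph_sum mulr_suml.
rewrite exchange_big /=; apply: eq_bigr => k _.
by rewrite mulr_sumr; apply: eq_bigr => j _; rewrite mxE intrM mulrA.
Qed.

Lemma pairing_delta (j : 'I_n) x : pairing (delta_mx 0 j) x = x 0 j.
Proof.
rewrite /pairing (bigD1 j) //= big1 ?addr0 => [|k /negbTE kj].
  by rewrite mxE !eqxx mul1r.
by rewrite mxE eqxx kj mul0r.
Qed.

Lemma pairing_intmx u (z : 'rV[int]_n) :
  pairing u (intmx z) = (\sum_(j < n) u 0 j * z 0 j)%:~R :> R.
Proof. by rewrite /pairing rmorph_sum; apply: eq_bigr => j _; rewrite mxE /= intrM. Qed.

Lemma lattice_pointD x y : lattice_point x -> lattice_point y -> lattice_point (x + y).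
Proof.
move=> [z ->] [w ->]; exists (z + w).
by apply/rowP => j; rewrite !mxE intrD.
Qed.

Lemma lattice_pointZ (k : int) x : lattice_point x -> lattice_point (k%:~R *: x).
Proof.
move=> [z ->]; exists (k *: z).
by apply/rowP => j; rewrite !mxE intrM.
Qed.

Lemma is_vertex_scale (S : set 'rV[R]_n) (k : R) m : k != 0 ->
  is_vertex S m -> is_vertex [set x | S (k^-1 *: x)] (k *: m).
Proof.
move=> k0 [Sm ext]; split; first by rewrite /= scalerA mulVf // scale1r.
move=> x y t Sx Sy t0 t1 e.
have : k^-1 *: x = k^-1 *: y.
  apply: (ext _ _ t) => //.
  by rewrite !scalerA ![_ * k^-1]mulrC -!scalerA -scalerDr -e scalerA mulVf // scale1r.
by move/(congr1 (fun v => k *: v)); rewrite !scalerA divff // !scale1r.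
Qed.

End Pairing.

Lemma intr_gt0_natr (R : realType) (z : int) : 0 < (z%:~R : R) ->
  exists2 k : nat, (0 < k)%N & (z%:~R : R) = k%:R.
Proof. by rewrite ltr0z; case: z => // k k0; exists k. Qed.

Lemma inf_min (R : realType) (E : set R) x : E x -> (forall t, E t -> x <= t) ->
  inf E = x.
Proof.
move=> Ex lbx; apply/le_anti/andP; split; first by apply: ge_inf Ex; exists x.
by apply: lb_le_inf; first exists x.
Qed.

Section Polyhedron.
Variables (R : realType) (n r : nat) (rho : 'I_r -> 'rV[int]_n) (a : 'I_r -> int).
Local Notation P := (polyhedron rho a : set 'rV[R]_n).
Local Notation Pdil p := (polyhedron rho (dil a p%:Z) : set 'rV[R]_n).
Implicit Types (x y w m : 'rV[R]_n).

Lemma polyhedron_dil (p : nat) x : (0 < p)%N -> Pdil p x <-> P ((p%:R : R)^-1 *: x).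
Proof.
move=> p0; have p0R : (0 : R) < p%:R by rewrite ltr0n.
by split=> h i; have := h i; rewrite /dil intrM pairingZ ler_pdivlMl // mulrN.
Qed.

Lemma polyhedron_dilE (p : nat) : (0 < p)%N ->
  Pdil p = [set x | P ((p%:R : R)^-1 *: x)]%classic.
Proof. by move=> p0; rewrite predeqE => x; apply: polyhedron_dil. Qed.

Lemma is_vertex_dil (p : nat) m : (0 < p)%N ->
  is_vertex P m -> is_vertex (Pdil p) (p%:R *: m).
Proof.
move=> p0; rewrite polyhedron_dilE //; apply: is_vertex_scale.
by rewrite pnatr_eq0 -lt0n.
Qed.

Lemma is_vertex_undil (p : nat) m : (0 < p)%N ->
  is_vertex (Pdil p) m -> is_vertex P ((p%:R : R)^-1 *: m).
Proof.
move=> p0; have p0R : (p%:R : R) != 0 by rewrite pnatr_eq0 -lt0n.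
move/(@is_vertex_scale _ _ _ (p%:R^-1)); rewrite invr_eq0 => /(_ p0R).
suff -> : [set x | Pdil p (p%:R^-1^-1 *: x)]%classic = P by [].
by rewrite predeqE => x /=; rewrite polyhedron_dil // scalerA invrK mulVf ?scale1r.
Qed.

Lemma pairing_dil_tight (p : nat) m i : (0 < p)%N ->
  pairing (rho i) ((p%:R : R) *: m) = - (dil a p%:Z i)%:~R <->
  pairing (rho i) m = - (a i)%:~R.
Proof.
move=> p0; have p0R : (p%:R : R) != 0 by rewrite pnatr_eq0 -lt0n.
rewrite pairingZ /dil intrM -mulrN; split; last by move=> ->.
exact: mulfI.
Qed.

Hypothesis boundedP : bounded P.

Lemma recession_eq0 y w : P y -> (forall i, 0 <= pairing (rho i) w) -> w = 0.
Proof.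
have [B hB] := boundedP; move=> Py hw; apply/rowP => j; rewrite mxE.
apply: contrapT => wj.
have B0 : 0 <= B by apply: le_trans (hB _ Py j).
have wj0 : 0 < `|w 0 j| by rewrite normr_gt0; apply/eqP.
pose l := (2 * B + 1) / `|w 0 j|.
have l0 : 0 <= l by rewrite divr_ge0 // addr_ge0 ?mulr_ge0.
have Pyw : P (y + l *: w).
  move=> i; rewrite pairingD pairingZ; apply: le_trans (Py i) _.
  by rewrite lerDl mulr_ge0.
have := hB _ Pyw j; rewrite !mxE.
have := lerB_normD (l * w 0 j) (y 0 j); rewrite normrM (ger0_norm l0).
rewrite /l divfK ?gt_eqF // addrC.
have := hB _ Py j; lra.
Qed.

Lemma exists_pairing_lt1 y w : (0 < n)%N -> P y -> exists i, pairing (rho i) w < 1.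
Proof.
move=> n0 Py; apply: contrapT => /forallNP hw.
have w0 : w = 0.
  apply: (recession_eq0 Py) => i.
  by have /negP := hw i; rewrite -leNgt; apply: le_trans.
case: (pickP (fun i : 'I_r => true)) => [i _ | none].
  by have := hw i; rewrite w0 pairing0 ltr01.
have := @recession_eq0 y (const_mx 1) Py (fun i => ltac:(by have := none i)).
by move/rowP/(_ (Ordinal n0)); rewrite !mxE => /eqP; rewrite oner_eq0.
Qed.

Definition active_set x : {set 'I_r} := [set i | pairing (rho i) x == - (a i)%:~R].

(* Moving from a non-vertex along a line inside P until a new facet is hit. *)
Lemma active_set_grow x : P x -> ~ is_vertex P x ->
  exists2 x', P x' & (#|active_set x| < #|active_set x'|)%N.
Proof.
move=> Px nv.
have [y [z [t [Py [Pz [t0 [t1 [e yz]]]]]]]] : exists y z t, P y /\ P z /\ 0 < t /\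
    t < 1 /\ x = t *: y + (1 - t) *: z /\ y <> z.
  apply: contrapT => H; apply: nv; split=> // y z t Py Pz t0 t1 e.
  by apply: contrapT => yz; apply: H; exists y, z, t.
pose w := y - z.
have w0 : w != 0 by rewrite subr_eq0; apply/eqP.
have active_w0 i : pairing (rho i) x = - (a i)%:~R -> pairing (rho i) w = 0.
  move=> hi.
  have sy : 0 <= pairing (rho i) y + (a i)%:~R by have := Py i; lra.
  have sz : 0 <= pairing (rho i) z + (a i)%:~R by have := Pz i; lra.
  have hx : t * (pairing (rho i) y + (a i)%:~R) +
            (1 - t) * (pairing (rho i) z + (a i)%:~R) == 0.
    by apply/eqP; move: hi; rewrite e pairingD !pairingZ; lra.
  rewrite paddr_eq0 ?mulr_ge0 // ?subr_ge0 ?ltW // !mulf_eq0 in hx.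
  move: hx; rewrite (gt_eqF t0) subr_eq0 (gt_eqF t1) /= => /andP[/eqP h1 /eqP h2].
  by rewrite /w pairingB; lra.
have [i1 wi1] : exists i, pairing (rho i) w < 0.
  apply: contrapT => /forallNP H; move: w0; rewrite (@recession_eq0 x w Px) ?eqxx //.
  by move=> i; rewrite leNgt; apply/negP/H.
pose ratio i := (pairing (rho i) x + (a i)%:~R) / - pairing (rho i) w.
case: (@arg_minP _ _ _ i1 (fun i => pairing (rho i) w < 0) ratio wi1) => i0 wi0 mini0.
set l := ratio i0.
have l0 : 0 <= l.
  rewrite /l /ratio divr_ge0 //; first by have := Px i0; lra.
  by rewrite oppr_ge0 ltW.
exists (x + l *: w).
  move=> i; rewrite pairingD pairingZ.
  case: (leP 0 (pairing (rho i) w)) => hw.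
    by apply: le_trans (Px i) _; rewrite lerDl mulr_ge0.
  by have := mini0 i hw; rewrite -/l /ratio ler_pdivlMr ?oppr_gt0 //; lra.
apply: proper_card; apply/properP; split.
  apply/fintype.subsetP => i; rewrite !inE pairingD pairingZ => /eqP hi.
  by rewrite active_w0 // mulr0 addr0 hi.
exists i0.
  rewrite inE pairingD pairingZ /l /ratio invrN mulrN mulNr divfK; last by rewrite lt_eqF.
  by apply/eqP; lra.
by rewrite inE; apply/negP => /eqP /active_w0 h; move: wi0; rewrite h ltxx.
Qed.

Lemma exists_vertex x0 : P x0 -> exists m, is_vertex P m.
Proof.
move=> Px0; apply: contrapT => /forallNP nv.
have large k : exists2 x, P x & (k <= #|active_set x|)%N.
  elim: k => [|k [x Px hk]]; first by exists x0.
  have [x' Px' hx'] := active_set_grow Px (nv x).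
  by exists x' => //; apply: leq_ltn_trans hx'.
have [x _ hx] := large r.+1.
by have := leq_trans hx (max_card (mem (active_set x))); rewrite card_ord ltnn.
Qed.

End Polyhedron.

Section ZBasis.
Variables (R : realType) (n : nat) (f : 'I_n -> 'rV[int]_n).
Hypothesis basis_f : Zbasis f.

Lemma Zbasis_pairing_eq0 (w : 'rV[R]_n) : (forall k, pairing (f k) w = 0) -> w = 0.
Proof.
move=> hw; apply/rowP => j; rewrite mxE -pairing_delta.
have [c ->] := basis_f.1 (delta_mx 0 j).
by rewrite pairing_sum big1 // => k _; rewrite hw mulr0.
Qed.

(* The dual basis exists over Z: write the unit vectors in the basis f, the
   coefficient matrix is then a left, hence also right, inverse of f. *)
Lemma Zbasis_dual : exists z : 'rV[int]_n,
  forall k, pairing (f k) (intmx z) = 1 :> R.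
Proof.
have [C hC] := choice (fun j : 'I_n => basis_f.1 (delta_mx 0 j)).
pose Cm : 'M[int]_n := \matrix_(j, k) C j k.
pose Fm : 'M[int]_n := \matrix_(k, j) f k 0 j.
have CF : Cm *m Fm = 1%:M.
  apply/matrixP => j j'; rewrite !mxE.
  have := congr1 (fun v : 'rV[int]_n => v 0 j') (hC j); rewrite /= mxE summxE.
  by rewrite eqxx /= eq_sym => ->; apply: eq_bigr => k _; rewrite !mxE.
exists (\row_j \sum_(k < n) C j k) => l; rewrite pairing_intmx.
have -> : \sum_(j < n) f l 0 j * (\row_j0 \sum_(k < n) C j0 k) 0 j =
          \sum_(k < n) (Fm *m Cm) l k.
  under eq_bigr => j _ do rewrite mxE mulr_sumr.
  rewrite exchange_big /=; apply: eq_bigr => k _; rewrite mxE.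
  by apply: eq_bigr => j _; rewrite !mxE.
rewrite (mulmx1C CF) (bigD1 l) //= big1 ?addr0; first by rewrite mxE eqxx.
by move=> k kl; rewrite mxE eq_sym (negbTE kl).
Qed.

End ZBasis.

Section SmoothPolytope.
Variables (R : realType) (n r : nat) (rho : 'I_r -> 'rV[int]_n) (a : 'I_r -> int).
Local Notation P := (polyhedron rho a : set 'rV[R]_n).
Implicit Types (x v w m : 'rV[R]_n).
Hypothesis smoothP : smooth R rho a.

Definition tight m i := pairing (rho i) m = - (a i)%:~R.

(* [m + s *: v] is the point [m(s)] when [is_step m v]. *)
Definition is_step m v := forall i, tight m i -> pairing (rho i) v = 1.
Definition vertex_step m := xget 0 (is_step m).

Definition slack m i := pairing (rho i) m + (a i)%:~R.
Definition defect m i := 1 - pairing (rho i) (vertex_step m).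
Definition vertex_ratio m i := defect m i / slack m i.

Lemma vertex_eq0 m w : is_vertex P m ->
  (forall i, tight m i -> pairing (rho i) w = 0) -> w = 0.
Proof.
move=> vm hw; have [e [_ tightE basis_e]] := smoothP vm.
by apply: (Zbasis_pairing_eq0 basis_e) => k; apply/hw/tightE; exists k.
Qed.

Lemma exists_lattice_step m : is_vertex P m -> exists z, is_step m (intmx z).
Proof.
move=> vm; have [e [_ tightE basis_e]] := smoothP vm.
have [z hz] := Zbasis_dual R basis_e.
by exists z => i /tightE [k <-]; apply: hz.
Qed.

Lemma vertex_stepP m : is_vertex P m -> is_step m (vertex_step m).
Proof.
by move=> vm; apply: xgetPex; have [z hz] := exists_lattice_step vm; exists (intmx z).
Qed.

Lemma vertex_step_unique m v : is_vertex P m -> is_step m v -> v = vertex_step m.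
Proof.
move=> vm hv; apply/eqP; rewrite -subr_eq0; apply/eqP/(vertex_eq0 vm) => i ti.
by rewrite pairingB hv // vertex_stepP // subrr.
Qed.

Lemma vertex_step_lattice m : is_vertex P m -> lattice_point (vertex_step m).
Proof.
move=> vm; have [z hz] := exists_lattice_step vm.
by exists z; rewrite -(vertex_step_unique vm hz).
Qed.

Lemma active_set_inj m m' : is_vertex P m -> is_vertex P m' ->
  active_set rho a m = active_set rho a m' -> m = m'.
Proof.
move=> vm vm' eA; apply/eqP; rewrite -subr_eq0; apply/eqP/(vertex_eq0 vm) => j tj.
have : j \in active_set rho a m by rewrite inE; apply/eqP.
by rewrite eA inE => /eqP tj'; rewrite pairingB tj tj' subrr.
Qed.

Lemma slack_ge0 m i : P m -> 0 <= slack m i.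
Proof. by move=> Pm; have := Pm i; rewrite /slack; lra. Qed.

Lemma defect_eq0 m i : is_vertex P m -> slack m i = 0 -> defect m i = 0.
Proof.
move=> vm s0; rewrite /defect vertex_stepP ?subrr //.
by rewrite /tight; move: s0; rewrite /slack; lra.
Qed.

Lemma spanned_vertexP (p q : nat) : (0 < p)%N ->
  spanned R rho (dil a p%:Z) q%:Z <-> forall m, is_vertex P m ->
    shiftP rho (dil a p%:Z) q%:Z (p%:R *: m + q%:R *: vertex_step m).
Proof.
move=> p0; split=> [sp m vm | shifted m' vm' x hx].
  apply: (sp _ (is_vertex_dil p0 vm)) => j /(pairing_dil_tight rho a m j p0) tj.
  rewrite pairingD !pairingZ tj vertex_stepP // /dil intrM; lra.
pose m := (p%:R : R)^-1 *: m'.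
have vm : is_vertex P m := is_vertex_undil p0 vm'.
have m'E : m' = p%:R *: m by rewrite /m scalerA divff ?scale1r // pnatr_eq0 -lt0n.
clearbody m.
suff -> : x = p%:R *: m + q%:R *: vertex_step m by apply: shifted.
apply/eqP; rewrite -subr_eq0; apply/eqP/(vertex_eq0 vm) => j tj.
have tj' : pairing (rho j) m' = - (dil a p%:Z j)%:~R.
  by rewrite m'E; apply/(pairing_dil_tight rho a m j p0).
rewrite pairingB pairingD !pairingZ (hx j tj') tj vertex_stepP // /dil intrM; lra.
Qed.

Lemma shiftP_vertex_shift (p q : nat) m :
  shiftP rho (dil a p%:Z) q%:Z (p%:R *: m + q%:R *: vertex_step m) <->
  forall i, q%:R * defect m i <= p%:R * slack m i.
Proof.
split=> h i; have := h i;
  by rewrite /defect /slack /dil intrB intrM pairingD !pairingZ; lra.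
Qed.

Lemma shift_ratioP (p q : nat) m : (0 < q)%N -> is_vertex P m ->
  (forall i, q%:R * defect m i <= p%:R * slack m i) <->
  (forall i, 0 < slack m i -> vertex_ratio m i <= p%:R / q%:R).
Proof.
move=> q0 vm; have q0R : (0 : R) < q%:R by rewrite ltr0n.
split=> h i; first by move=> s0; rewrite ler_pdivrMr // mulrAC ler_pdivlMr // mulrC.
have [s0|] := ltP 0 (slack m i).
  by have := h i s0; rewrite ler_pdivrMr // mulrAC ler_pdivlMr // [_ * q%:R]mulrC.
rewrite le_eqVlt ltNge slack_ge0 ?orbF; last exact: vm.1.
by move=> /eqP s0; rewrite s0 defect_eq0 // !mulr0.
Qed.

Lemma spanned_ratioP (p q : nat) : (0 < p)%N -> (0 < q)%N ->
  spanned R rho (dil a p%:Z) q%:Z <-> forall m i, is_vertex P m ->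
    0 < slack m i -> vertex_ratio m i <= p%:R / q%:R.
Proof.
move=> p0 q0; rewrite spanned_vertexP //; split=> h m.
  by move=> i vm; move: (h m vm) => /shiftP_vertex_shift /(shift_ratioP p q0 vm); apply.
by move=> vm; apply/shiftP_vertex_shift/(shift_ratioP p q0 vm) => i; apply: h.
Qed.

Lemma exists_positive_ratio m0 : (0 < n)%N -> bounded P -> is_vertex P m0 ->
  exists i, 0 < slack m0 i /\ 0 < vertex_ratio m0 i.
Proof.
move=> n0 bP vm0.
have [i lt1] := exists_pairing_lt1 bP (vertex_step m0) n0 vm0.1.
have s0 : 0 < slack m0 i.
  rewrite lt_def slack_ge0 ?andbT; last exact: vm0.1.
  apply/eqP => s0; move: lt1; rewrite vertex_stepP ?ltxx //.
  by rewrite /tight; move: s0; rewrite /slack; lra.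
by exists i; split=> //; rewrite divr_gt0 // /defect subr_gt0.
Qed.

(* Vertices are determined by their active sets, so the pairs (vertex, facet)
   are indexed by the finite type [{set 'I_r} * 'I_r]. *)
Lemma exists_max_ratio m0 i0 : is_vertex P m0 -> 0 < slack m0 i0 ->
  exists m i, [/\ is_vertex P m, 0 < slack m i,
    vertex_ratio m0 i0 <= vertex_ratio m i &
    forall m' i', is_vertex P m' -> 0 < slack m' i' ->
      vertex_ratio m' i' <= vertex_ratio m i].
Proof.
move=> vm0 s0.
pose vtx (S : {set 'I_r}) :=
  xget 0 [set m | is_vertex P m /\ active_set rho a m = S]%classic.
have vtxK m : is_vertex P m -> vtx (active_set rho a m) = m.
  move=> vm; apply: xget_unique => [|y [vy ey]]; first by split.
  exact: active_set_inj vy vm ey.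
pose F (k : {set 'I_r} * 'I_r) := vertex_ratio (vtx k.1) k.2.
pose admissible (k : {set 'I_r} * 'I_r) :=
  `[< is_vertex P (vtx k.1) /\ 0 < slack (vtx k.1) k.2 >].
have adm0 : admissible (active_set rho a m0, i0) by apply/asboolP; rewrite /= vtxK.
case: (@arg_maxP _ _ _ _ admissible F adm0) => -[S i] /asboolP [vm s] maxF.
exists (vtx S), i; split=> //; first by have := maxF _ adm0; rewrite /F /= vtxK.
move=> m' i' vm' s'; have := maxF (active_set rho a m', i'); rewrite /F /= vtxK //.
by apply; apply/asboolP; rewrite /= vtxK.
Qed.

Lemma vertex_ratio_nat m i : (forall m, is_vertex P m -> lattice_point m) ->
  is_vertex P m -> 0 < slack m i -> 0 < defect m i ->
  exists p q : nat, [/\ (0 < p)%N, (0 < q)%N & vertex_ratio m i = p%:R / q%:R].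
Proof.
move=> latt vm; have [zm em] := latt m vm; have [zv ev] := vertex_step_lattice vm.
have sE : slack m i = (\sum_(j < n) rho i 0 j * zm 0 j + a i)%:~R.
  by rewrite /slack em pairing_intmx intrD.
have dE : defect m i = (1 - \sum_(j < n) rho i 0 j * zv 0 j)%:~R.
  by rewrite /defect ev pairing_intmx intrB.
rewrite /vertex_ratio sE dE => /intr_gt0_natr [q q0 ->] /intr_gt0_natr [p p0 ->].
by exists p, q.
Qed.

Lemma nef_valueE m i (p q : nat) : (0 < p)%N -> (0 < q)%N ->
  is_vertex P m -> 0 < slack m i -> vertex_ratio m i = p%:R / q%:R ->
  (forall m' i', is_vertex P m' -> 0 < slack m' i' ->
     vertex_ratio m' i' <= vertex_ratio m i) ->
  nef_value R rho a = p%:R / q%:R.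
Proof.
move=> p0 q0 vm s0 er maxm; apply: inf_min.
  exists p, q; split=> //; apply/spanned_ratioP => // m' i' vm' s'.
  by rewrite -er; apply: maxm.
move=> _ [p' [q' [p'0 q'0 -> sp]]]; rewrite -er.
exact: (spanned_ratioP p'0 q'0).1 sp m i vm s0.
Qed.

(* [pP] is then 1-spanned, so [p m + v_m] is a lattice point of [(pP)^(1)]. *)
Lemma codegree_le c (p : nat) : is_codegree R rho a c ->
  (forall m, is_vertex P m -> lattice_point m) -> (exists m, is_vertex P m) ->
  (0 < p)%N -> (forall m i, is_vertex P m -> 0 < slack m i -> vertex_ratio m i <= p%:R) ->
  (c <= p)%N.
Proof.
move=> [_ minc] latt [m0 vm0] p0 bound.
have sp : spanned R rho (dil a p%:Z) 1.
  by apply/spanned_ratioP => // m i vm s; rewrite divr1; apply: bound.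
rewrite leqNgt; apply/negP => /minc; apply.
exists (p%:R *: m0 + 1%:R *: vertex_step m0); split.
  apply: lattice_pointD; first exact: (lattice_pointZ p%:Z (latt _ vm0)).
  by rewrite scale1r; apply: vertex_step_lattice.
exact: (spanned_vertexP 1 p0).1 sp m0 vm0.
Qed.

End SmoothPolytope.

Theorem lemma2p4 (R : realType) (n r : nat)
    (rho : 'I_r -> 'rV[int]_n) (a : 'I_r -> int) (c : nat) :
  (0 < n)%N ->
  lattice_polytope_facets R rho a ->
  smooth R rho a ->
  is_codegree R rho a c ->
  (exists q : rat, 0 < q /\ nef_value R rho a = ratr q) /\
  c%:R - 1 < nef_value R rho a.
Proof.
move=> n0 [bP [[pts [Ppts _]] [latt _]]] smoothP codeg.
have [m0 vm0] := exists_vertex bP (Ppts ord0).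
have [i0 [s0 r0]] := exists_positive_ratio smoothP n0 bP vm0.
have [m [i [vm s rmax maxm]]] := exists_max_ratio smoothP vm0 s0.
have r_gt0 := lt_le_trans r0 rmax.
have d_gt0 : 0 < defect rho a m i.
  by move: r_gt0; rewrite /vertex_ratio pmulr_lgt0 // invr_gt0.
have [p [q [p0 q0 er]]] := vertex_ratio_nat smoothP latt vm s d_gt0.
rewrite (nef_valueE smoothP p0 q0 vm s er maxm) -er; split.
  exists (p%:R / q%:R); rewrite er divr_gt0 ?ltr0n //.
  by rewrite fmorph_div /= !ratr_nat.
rewrite ltNge; apply/negP => ratio_le.
case: c codeg ratio_le => [|[|k]] codeg ratio_le; [lra | lra |].
suff : (k.+2 <= k.+1)%N by rewrite ltnn.
apply: (codegree_le smoothP codeg latt (ex_intro _ m0 vm0) (ltn0Sn k)).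
move=> m' i' vm' s'; apply: le_trans (maxm _ _ vm' s') _.
by move: ratio_le; rewrite -natr1 addrK.
Qed.
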